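(* In the discrete setting described in the context, let $x_1,\dots,x_k\in\mathrm{dom}\,\partial l$ be arbitrary, and for each $i\ge1$ let $u_i\in\partial f(x_i)=\nabla g(x_i)+\partial l(x_i)$ and $$E_i:=A_i\Bigl\langle u_i,\;x_i-\frac{a_i}{A_i}z_i-\frac{A_{i-1}}{A_i}x_{i-1}\Bigr\rangle-\frac{\gamma}{q}\|z_i-z_{i-1}\|^q.$$ Then for all $k\ge1$, $$A_kf(x_k)-\psi_k(z_k)\le\sum_{i=1}^kE_i.$$
   Context: $\|\cdot\|$ is a norm on $\mathbb{R}^d$. A function $\varphi:\mathbb{R}^d\to\mathbb{R}\cup\{+\infty\}$ is $(s,\sigma)$-uniformly convex w.r.t. $\|\cdot\|$ ($s\ge2$, $\sigma>0$) if $\varphi(y)\ge\varphi(x)+\langle\zeta,y-x\rangle+\frac{\sigma}{s}\|y-x\|^s$ for all $y$, all $x$ with $\partial\varphi(x)\ne\emptyset$ and all $\zeta\in\partial\varphi(x)$. $f=g+l$ with $g:\mathbb{R}^d\to\mathbb{R}$ convex and differentiable and $l:\mathbb{R}^d\to\mathbb{R}\cup\{+\infty\}$ proper, closed, convex. $\hat f(x;y):=g(y)+\langle\nabla g(y),x-y\rangle+l(x)$. Fix $q\ge2$, $\gamma>0$, $x_0\in\mathrm{dom}\,l$, and $h(\cdot;x_0):\mathbb{R}^d\to\mathbb{R}$ convex with $h(x;x_0)\ge0$, $h(x;x_0)=0$ iff $x=x_0$, and $h(\cdot;x_0)$ $(q,\gamma)$-uniformly convex w.r.t. $\|\cdot\|$.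 Let $a_1,a_2,\dots>0$, $A_0:=0$, $A_i:=A_{i-1}+a_i$. Set $\psi_0:=h(\cdot;x_0)$, $\psi_k(x):=\sum_{i=1}^ka_i\hat f(x;x_i)+h(x;x_0)$, $z_0:=x_0$, and for $k\ge1$ let $z_k$ be the unique minimizer of $\psi_k$. *)

From Stdlib Require Import Reals Lra.
From mathcomp Require Import ssreflect ssrfun ssrbool eqtype ssrnat fintype bigop.
Set Implicit Arguments.
Unset Strict Implicit.
Local Open Scope R_scope.

Definition vec (d : nat) := 'I_d -> R.
Definition vadd {d} (x y : vec d) : vec d := fun i => x i + y i.
Definition vsub {d} (x y : vec d) : vec d := fun i => x i - y i.
Definition vscale {d} (c : R) (x : vec d) : vec d := fun i => c * x i.
Definition vzero {d} : vec d := fun _ => 0.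
Definition inner {d} (x y : vec d) : R := \big[Rplus/R0]_(i < d) (x i * y i).

Definition is_norm {d} (N : vec d -> R) : Prop :=
  (forall x, 0 <= N x) /\
  (forall x, N x = 0 -> x = vzero) /\
  (forall c x, N (vscale c x) = Rabs c * N x) /\
  (forall x y, N (vadd x y) <= N x + N y).

(* real power t^s for t >= 0, s > 0 (with 0^s = 0) *)
Definition rpow (t s : R) : R := if Rle_dec t 0 then 0 else Rpower t s.

(* ---------- extended reals R ∪ {+oo}: None = +oo ---------- *)
Definition ER := option R.
Definition ele (a b : ER) : Prop :=
  match a, b with
  | _, None => True
  | None, Some _ => False
  | Some x, Some y => x <= y
  end.
Definition eplus (a b : ER) : ER :=
  match a, b with Some x, Some y => Some (x + y) | _, _ => None end.
Definition escale (c : R) (a : ER) : ER :=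
  match a with Some x => Some (c * x) | None => None end.

Definition efun d := vec d -> ER.

Definition in_dom {d} (phi : efun d) (x : vec d) : Prop := exists r, phi x = Some r.
Definition proper {d} (phi : efun d) : Prop := exists x, in_dom phi x.

(* convexity (for t in (0,1), avoiding 0 * oo) *)
Definition econvex {d} (phi : efun d) : Prop :=
  forall x y t, 0 < t < 1 ->
    ele (phi (vadd (vscale t x) (vscale (1 - t) y)))
        (eplus (escale t (phi x)) (escale (1 - t) (phi y))).
Definition rconvex {d} (phi : vec d -> R) : Prop :=
  forall x y t, 0 <= t <= 1 ->
    phi (vadd (vscale t x) (vscale (1 - t) y)) <= t * phi x + (1 - t) * phi y.

(* closed = lower semicontinuous = all sublevel sets closed (sequentially,
   coordinatewise convergence in R^d) *)
Definition vcv {d} (y : nat -> vec d) (x : vec d) : Prop :=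
  forall i, Un_cv (fun n => y n i) (x i).
Definition eclosed {d} (phi : efun d) : Prop :=
  forall (y : nat -> vec d) x alpha, vcv y x ->
    (forall n, ele (phi (y n)) (Some alpha)) -> ele (phi x) (Some alpha).

Definition subgrad {d} (phi : efun d) (x zeta : vec d) : Prop :=
  exists fx, phi x = Some fx /\
    forall y, ele (Some (fx + inner zeta (vsub y x))) (phi y).
Definition in_dom_subdiff {d} (phi : efun d) (x : vec d) : Prop :=
  exists zeta, subgrad phi x zeta.

Definition unif_convex {d} (N : vec d -> R) (s sigma : R) (phi : efun d) : Prop :=
  forall x y zeta fx, phi x = Some fx -> subgrad phi x zeta ->
    ele (Some (fx + inner zeta (vsub y x) + sigma / s * rpow (N (vsub y x)) s)) (phi y).

(* gradient (Frechet derivative w.r.t. N; all norms on R^d are equivalent) *)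
Definition is_gradient {d} (N : vec d -> R) (g : vec d -> R) (G : vec d -> vec d) : Prop :=
  forall x eps, 0 < eps -> exists delta, 0 < delta /\
    forall hh, N hh < delta ->
      Rabs (g (vadd x hh) - g x - inner (G x) hh) <= eps * N hh.

Definition fsum {d} (g : vec d -> R) (l : efun d) : efun d :=
  fun x => eplus (Some (g x)) (l x).
Definition fhat {d} (g : vec d -> R) (G : vec d -> vec d) (l : efun d)
  (x y : vec d) : ER :=
  eplus (Some (g y + inner (G y) (vsub x y))) (l x).

Fixpoint Acum (a : nat -> R) (k : nat) : R :=
  match k with O => 0 | S k' => Acum a k' + a (S k') end.

Fixpoint psi {d} (g : vec d -> R) (G : vec d -> vec d) (l : efun d)
  (h : vec d -> R) (a : nat -> R) (xs : nat -> vec d) (k : nat) : efun d :=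
  match k with
  | O => fun x => Some (h x)
  | S k' => fun x => eplus (psi g G l h a xs k' x)
                           (escale (a (S k')) (fhat g G l x (xs (S k'))))
  end.

Fixpoint sum1 (F : nat -> R) (k : nat) : R :=
  match k with O => 0 | S k' => sum1 F k' + F (S k') end.

(* The claim
   A_k f(x_k) - psi_k(z_k) <= sum_{i<=k} E_i is proved by induction on k,
   comparing psi_{k+1}(z_{k+1}) = psi_k(z_{k+1}) + a_{k+1} fhat(z_{k+1}; x_{k+1})
   with three lower bounds:
   - growth at minimizers: psi_k(z_{k+1}) >= psi_k(z_k) + gamma/q ||z_{k+1}-z_k||^q,
     because z_k minimizes h + (convex) and h is (q,gamma)-uniformly convex;
   - the model fhat(.; x_{k+1}) has the affine minorant f(x_{k+1}) + <u, . - x_{k+1}>;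
   - convexity of f, f(x_k) >= f(x_{k+1}) + <u, x_k - x_{k+1}>, using the
     gradient inequality for g.
   Uniform convexity is only assumed at points with a subgradient, so we first
   show that finite convex functions on R^d have subgradients everywhere (a
   coordinate-by-coordinate Hahn-Banach argument), then derive uniform convexity
   along chords and the growth at minimizers. *)

From Pilot Require Import Defs.
From Stdlib Require Import Reals Lra FunctionalExtensionality.
From HB Require Import structures.
From mathcomp Require Import ssreflect ssrfun ssrbool eqtype ssrnat seq fintype bigop.
(* Re-import so that [proper] and [in_dom] refer to the definitions of Defs,
   not to their fintype/ssrbool homonyms. *)
Import Defs.
Local Open Scope R_scope.

(* Real addition is a commutative monoid, so the bigop lemmas apply to [inner]. *)
HB.instance Definition _ := Monoid.isComLaw.Build R 0 Rplus
  (fun a b c => esym (Rplus_assoc a b c)) Rplus_comm Rplus_0_l.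

Lemma big_Rmult_distr (I : Type) (r : seq I) (c : R) (F : I -> R) :
  \big[Rplus/0]_(i <- r) (c * F i) = c * \big[Rplus/0]_(i <- r) F i.
Proof.
elim: r => [|x r IH]; first by rewrite !big_nil; ring.
by rewrite !big_cons IH; ring.
Qed.

(* Linearity of [inner u], stated pointwise so that any vector expression
   can be expanded by a single [ring]/[field] on coordinates. *)
Lemma inner_lin {d} (u x y v : vec d) (a b : R) :
  (forall i, v i = a * x i + b * y i) -> inner u v = a * inner u x + b * inner u y.
Proof.
move=> Hv; rewrite /inner.
rewrite (eq_bigr (fun i => a * (u i * x i) + b * (u i * y i))); last first.
  by move=> i _; rewrite Hv; ring.
by rewrite big_split /= !big_Rmult_distr.
Qed.

Lemma inner_prop {d} (u x v : vec d) (c : R) :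
  (forall i, v i = c * x i) -> inner u v = c * inner u x.
Proof.
move=> Hv; rewrite (@inner_lin d u x x v c 0); first ring.
by move=> i; rewrite Hv; ring.
Qed.

Lemma inner_comm {d} (u v : vec d) : inner u v = inner v u.
Proof. by rewrite /inner; apply: eq_bigr => i _; ring. Qed.

Lemma inner_addl {d} (u1 u2 v : vec d) :
  inner (vadd u1 u2) v = inner u1 v + inner u2 v.
Proof.
rewrite inner_comm (@inner_lin d v u1 u2 (vadd u1 u2) 1 1); last first.
  by move=> i; rewrite /vadd; ring.
by rewrite !(inner_comm v); ring.
Qed.

Definition unitv {d} (j : 'I_d) : vec d := fun i => if i == j then 1 else 0.

Lemma inner_unitv {d} (j : 'I_d) (v : vec d) : inner (unitv j) v = v j.
Proof.
rewrite /inner (bigD1 j) //= /unitv eqxx big1 => [|i /negbTE ->]; ring.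
Qed.

Lemma le_of_le_eps (a b c : R) :
  0 <= c -> (forall eps, 0 < eps -> a <= b + eps * c) -> a <= b.
Proof.
move=> Hc H; apply: Rnot_lt_le => Hlt.
set e := (a - b) / (2 * (c + 1)).
have He : 0 < e by apply: Rdiv_lt_0_compat; lra.
have Ee : e * (2 * (c + 1)) = a - b by rewrite /e; field; lra.
have := H _ He; nra.
Qed.

(* The derivative is compared with
   difference quotients along the segment [x, y]. *)
Lemma gradient_inequality {d} {N : vec d -> R} {g : vec d -> R} {G : vec d -> vec d} :
  is_norm N -> rconvex g -> is_gradient N g G ->
  forall x y, g x + inner (G x) (vsub y x) <= g y.
Proof.
move=> [HN0 [_ [HNs _]]] Hc Hg x y.
set v := vsub y x; have Nv := HN0 v.
suff: inner (G x) v <= g y - g x by lra.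
apply: (@le_of_le_eps _ _ (N v)) => // eps Heps.
have [del [Hdel Hd]] := Hg x eps Heps.
set t := Rmin 1 (del / (2 * (N v + 1))).
have Hdp : 0 < del / (2 * (N v + 1)) by apply: Rdiv_lt_0_compat; lra.
have Ht0 : 0 < t by apply: Rmin_glb_lt; lra.
have Ht1 : t <= 1 by apply: Rmin_l.
have Ht2 : t * (2 * (N v + 1)) <= del.
  have E1 : del / (2 * (N v + 1)) * (2 * (N v + 1)) = del by field; lra.
  have := Rmin_r 1 (del / (2 * (N v + 1))); rewrite -/t; nra.
have ENt : N (vscale t v) = t * N v by rewrite HNs Rabs_pos_eq //; lra.
have Hsmall : N (vscale t v) < del by rewrite ENt; nra.
have Hseg : vadd x (vscale t v) = vadd (vscale t y) (vscale (1 - t) x).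
  by apply: functional_extensionality => i; rewrite /vadd /vscale /v /vsub; ring.
have Hdiff := Hd _ Hsmall.
rewrite (@inner_prop d (G x) v (vscale t v) t) // ENt Hseg in Hdiff.
have Hconv := Hc y x t (conj (Rlt_le _ _ Ht0) Ht1).
have Habs := Rle_abs (- (g (vadd (vscale t y) (vscale (1 - t) x)) - g x - t * inner (G x) v)).
rewrite Rabs_Ropp in Habs.
apply: (Rmult_le_reg_l t) => //; lra.
Qed.

Lemma rconvex_sub_linear {d} (h : vec d -> R) (ze x : vec d) :
  rconvex h -> rconvex (fun y => h y - inner ze (vsub y x)).
Proof.
move=> Hh y y' t Ht; have := Hh y y' t Ht.
rewrite (@inner_lin d ze (vsub y x) (vsub y' x) _ t (1 - t)); first lra.
by move=> i; rewrite /vsub /vadd /vscale; ring.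
Qed.

(* Three-chord inequality: if the point of the segment [y', y] that splits it
   in ratio s' : s is at level >= c for a convex F, then the slope of F from
   y' up to c is at most the slope from c up to F y. *)
Lemma chord_slopes {d} (F : vec d -> R) (y y' : vec d) (s s' c : R) :
  rconvex F -> 0 < s -> 0 < s' ->
  c <= F (vadd (vscale (s' / (s + s')) y) (vscale (1 - s' / (s + s')) y')) ->
  (c - F y') / s' <= (F y - c) / s.
Proof.
move=> HF Hs Hs' Hc.
set t := s' / (s + s') in Hc *.
have Ht : 0 <= t <= 1.
  have Et : t * (s + s') = s' by rewrite /t; field; lra.
  split; nra.
have Hcomb : (s + s') * c <= s' * F y + s * F y'.
  have := HF y y' t Ht; rewrite -/t => Hconv.
  have -> : s' * F y + s * F y' = (s + s') * (t * F y + (1 - t) * F y').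
    by rewrite /t; field; lra.
  apply: Rmult_le_compat_l; lra.
apply: (Rmult_le_reg_r (s * s')); first exact: Rmult_lt_0_compat.
have -> : (c - F y') / s' * (s * s') = s * (c - F y') by field; lra.
have -> : (F y - c) / s * (s * s') = s' * (F y - c) by field; lra.
lra.
Qed.

(* Completeness of R in the form of a one-dimensional separation: a family
   of lower slopes lying below a family of upper slopes can be separated. *)
Lemma separate_slopes {T : Type} {PL PU : T -> Prop} {sl su : T -> R} :
  (exists y, PL y) -> (exists y, PU y) ->
  (forall y' y, PL y' -> PU y -> sl y' <= su y) ->
  exists al, (forall y', PL y' -> sl y' <= al) /\ (forall y, PU y -> al <= su y).
Proof.
move=> [yl HL] [yu HU] Hle.
pose E r := exists y', PL y' /\ r = sl y'.
have Hb : bound E by exists (su yu) => r [y' [Hy' ->]]; apply: Hle.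
have [al [Hub Hlub]] := completeness E Hb (ex_intro _ (sl yl) (ex_intro _ yl (conj HL erefl))).
exists al; split=> [y' Hy'|y Hy]; first by apply: Hub; exists y'.
by apply: Hlub => r [y' [Hy' ->]]; apply: Hle.
Qed.

Definition agrees_from {d} (m : nat) (x y : vec d) : Prop :=
  forall i : 'I_d, (m <= i)%N -> y i = x i.

Lemma agrees_from_unitv {d} (m : nat) (x : vec d) (j : 'I_d) (c : R) :
  (j < m.+1)%N -> agrees_from m.+1 x (vadd x (vscale c (unitv j))).
Proof.
move=> Hj i Hi; rewrite /vadd /vscale /unitv.
case: eqP => [Eij|_]; last ring.
by move: Hi; rewrite Eij leqNgt Hj.
Qed.

(* One-dimensional Hahn-Banach step: a subgradient [ze] of [h] at [x] relative
   to the vectors agreeing with [x] from coordinate [m] on is extended to one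
   relative to those agreeing from coordinate [m+1] on, by adding a multiple
   [al] of the [m]-th basis vector.  Along that coordinate, [al] must separate
   the left slopes of [F = h - <ze, . - x>] at [x] from its right slopes. *)
Section SubgradientExtension.

Variables (d : nat) (h : vec d -> R) (x ze : vec d) (m : nat).
Hypothesis Hh : rconvex h.
Hypothesis Hmd : (m < d)%N.
Hypothesis Hze : forall y, agrees_from m x y -> h x + inner ze (vsub y x) <= h y.

Let j : 'I_d := Ordinal Hmd.
Let F (y : vec d) : R := h y - inner ze (vsub y x).

Lemma agrees_from_succ (y : vec d) :
  agrees_from m.+1 x y -> y j = x j -> agrees_from m x y.
Proof.
move=> Hy Hj i; rewrite leq_eqVlt => /orP [/eqP Ei|Hi]; last exact: Hy.
by have -> : i = j by apply: val_inj; rewrite /= -Ei.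
Qed.

(* Left slopes lie below right slopes: the segment [y', y] crosses the
   hyperplane {v_m = x_m}, where [F >= h x] by hypothesis. *)
Lemma extension_slopes_ordered (y' y : vec d) :
  agrees_from m.+1 x y' -> agrees_from m.+1 x y -> y' j < x j -> x j < y j ->
  (h x - F y') / (x j - y' j) <= (F y - h x) / (y j - x j).
Proof.
move=> Hy' Hy Hlt' Hlt.
apply: chord_slopes; [exact: rconvex_sub_linear | lra | lra |].
set t := (x j - y' j) / (y j - x j + (x j - y' j)).
suff Hw : agrees_from m x (vadd (vscale t y) (vscale (1 - t) y')).
  by have := Hze _ Hw; rewrite /F; lra.
apply: agrees_from_succ => [i Hi|]; rewrite /vadd /vscale.
  by rewrite (Hy i) // (Hy' i) //; ring.
by rewrite /t; field; lra.
Qed.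

Lemma extension_by_separator (al : R) :
  (forall y', agrees_from m.+1 x y' -> y' j < x j -> (h x - F y') / (x j - y' j) <= al) ->
  (forall y, agrees_from m.+1 x y -> x j < y j -> al <= (F y - h x) / (y j - x j)) ->
  forall y, agrees_from m.+1 x y ->
  h x + inner (vadd ze (vscale al (unitv j))) (vsub y x) <= h y.
Proof.
move=> Hleft Hright y Hy.
have Hunit : inner (vscale al (unitv j)) (vsub y x) = al * (y j - x j).
  by rewrite inner_comm (@inner_prop d (vsub y x) (unitv j) _ al) // inner_comm inner_unitv.
rewrite inner_addl Hunit.
case: (total_order_T (y j) (x j)) => [[Hlt|Heq]|Hgt].
- move: (Hleft y Hy Hlt) => /(Rmult_le_compat_r (x j - y j) _ _ (ltac:(lra))).
  have -> : (h x - F y) / (x j - y j) * (x j - y j) = h x - F y by field; lra.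
  rewrite /F; lra.
- by have := Hze y (agrees_from_succ y Hy Heq); rewrite Heq; lra.
- move: (Hright y Hy Hgt) => /(Rmult_le_compat_r (y j - x j) _ _ (ltac:(lra))).
  have -> : (F y - h x) / (y j - x j) * (y j - x j) = F y - h x by field; lra.
  rewrite /F; lra.
Qed.

Lemma subgrad_extend :
  exists ze', forall y, agrees_from m.+1 x y -> h x + inner ze' (vsub y x) <= h y.
Proof.
pose PL y' := agrees_from m.+1 x y' /\ y' j < x j.
pose PU y := agrees_from m.+1 x y /\ x j < y j.
have Hj : (j < m.+1)%N by [].
have HL : exists y', PL y'.
  exists (vadd x (vscale (-1) (unitv j))); split; first exact: agrees_from_unitv.
  by rewrite /vadd /vscale /unitv eqxx; lra.
have HU : exists y, PU y.
  exists (vadd x (vscale 1 (unitv j))); split; first exact: agrees_from_unitv.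
  by rewrite /vadd /vscale /unitv eqxx; lra.
have Hslopes : forall y' y, PL y' -> PU y ->
    (h x - F y') / (x j - y' j) <= (F y - h x) / (y j - x j).
  by move=> y' y [Hy' Hlt'] [Hy Hlt]; apply: extension_slopes_ordered.
have [al [Hleft Hright]] := separate_slopes HL HU Hslopes.
exists (vadd ze (vscale al (unitv j))).
by apply: extension_by_separator => [y' Hy' Hlt|y Hy Hlt];
  [apply: Hleft | apply: Hright].
Qed.

End SubgradientExtension.

(* Every finite convex function on R^d has a subgradient at every point:
   extend a subgradient one coordinate at a time. *)
Lemma subgrad_exists {d} (h : vec d -> R) : rconvex h ->
  forall x, exists ze : vec d, forall y, h x + inner ze (vsub y x) <= h y.
Proof.
move=> Hh x.
suff [ze Hze] : exists ze : vec d, forall y, agrees_from d x y -> h x + inner ze (vsub y x) <= h y.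
  by exists ze => y; apply: Hze => i; rewrite leqNgt ltn_ord.
suff /(_ d (leqnn d)) : forall m, (m <= d)%N -> exists ze : vec d,
    forall y, agrees_from m x y -> h x + inner ze (vsub y x) <= h y by [].
elim=> [|m IH] Hm.
  exists (fun _ => 0) => y Hy.
  have -> : y = x by apply: functional_extensionality => i; apply: Hy.
  rewrite (@inner_prop d _ (vsub x x) _ 0); first lra.
  by move=> i; rewrite /vsub; ring.
have [ze Hze] := IH (ltnW Hm).
exact: (@subgrad_extend d h x ze m Hh Hm Hze).
Qed.

Lemma Rdiv_nonneg (a b : R) : 0 <= a -> 0 < b -> 0 <= a / b.
Proof. by move=> Ha Hb; apply: Rmult_le_pos => //; left; apply: Rinv_0_lt_compat. Qed.

Lemma rpow_nonneg (t s : R) : 0 <= rpow t s.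
Proof.
rewrite /rpow; case: Rle_dec => _ /=; first lra.
by left; apply: exp_pos.
Qed.

Lemma rpow_scale (c t s : R) : 0 < c -> 0 <= t -> rpow (c * t) s = Rpower c s * rpow t s.
Proof.
move=> Hc Ht; rewrite /rpow.
case: (Rle_dec t 0) => Ht0 /=.
  have -> : t = 0 by lra.
  by rewrite Rmult_0_r; case: Rle_dec => /= [_|]; [ring | lra].
case: Rle_dec => [Hct|_] /=; last by rewrite Rpower_mult_distr //; lra.
have : 0 < c * t by apply: Rmult_lt_0_compat; lra.
lra.
Qed.

Lemma Rpower_root_unit (r q : R) : 0 < r < 1 -> 0 < q -> 0 < Rpower r (1 / q) < 1.
Proof.
move=> Hr Hq; split; first exact: exp_pos.
rewrite /Rpower -[X in _ < X]exp_0; apply: exp_increasing.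
have Hln : ln r < 0 by rewrite -ln_1; apply: ln_increasing; lra.
have : 0 < 1 / q by apply: Rdiv_lt_0_compat; lra.
nra.
Qed.

Lemma le_of_Rpower_limit (K D q : R) : 0 < q -> 0 <= K ->
  (forall t, 0 < t < 1 -> Rpower (1 - t) q * K <= D) -> K <= D.
Proof.
move=> Hq HK Ht; apply: Rnot_lt_le => HDK.
have HD : 0 <= D.
  have := Ht (1 / 2) ltac:(lra); have : 0 < Rpower (1 - 1 / 2) q by apply: exp_pos.
  nra.
set r := (D / K + 1) / 2.
have ErK : r * K = (D + K) / 2 by rewrite /r; field; lra.
have Hr : 0 < r < 1.
  split; first by apply: Rdiv_lt_0_compat; [apply: Rplus_le_lt_0_compat; [apply: Rdiv_nonneg|]|]; lra.
  apply: (Rmult_lt_reg_r K); lra.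
have [Hrho0 Hrho1] := Rpower_root_unit r q Hr Hq.
have := Ht (1 - Rpower r (1 / q)) ltac:(lra).
have -> : 1 - (1 - Rpower r (1 / q)) = Rpower r (1 / q) by ring.
rewrite Rpower_mult.
have -> : 1 / q * q = 1 by field; lra.
rewrite Rpower_1; lra.
Qed.

(* Uniform convexity along chords: if [h] is (q,gam)-uniformly convex in the
   subgradient sense, then at the point [t y + (1-t) z] the convexity
   inequality holds with a gain of [t (1-t)^q gam/q ||y - z||^q].  The proof
   applies uniform convexity at that point, towards [y] and towards [z]. *)
Lemma unif_convex_chord {d} {N : vec d -> R} {q gam : R} {h : vec d -> R} :
  is_norm N -> 0 < q -> 0 <= gam -> rconvex h ->
  unif_convex N q gam (fun x => Some (h x)) ->
  forall y z t, 0 < t < 1 ->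
  h (vadd (vscale t y) (vscale (1 - t) z))
    + t * (Rpower (1 - t) q * (gam / q * rpow (N (vsub y z)) q))
  <= t * h y + (1 - t) * h z.
Proof.
move=> [HN0 [_ [HNs _]]] Hq Hgam Hh Huc y z t Ht.
set e := vsub y z; set yt := vadd (vscale t y) (vscale (1 - t) z).
have [ze Hze] := subgrad_exists h Hh yt.
have Hsg : subgrad (fun x => Some (h x)) yt ze by exists (h yt).
have Uz := Huc yt z ze (h yt) erefl Hsg.
have Uy := Huc yt y ze (h yt) erefl Hsg.
rewrite /= (@inner_prop d ze e (vsub z yt) (- t)) in Uz; last first.
  by move=> i; rewrite /e /yt /vsub /vadd /vscale; ring.
have Eyt : vsub y yt = vscale (1 - t) e.
  by apply: functional_extensionality => i; rewrite /e /yt /vsub /vadd /vscale; ring.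
rewrite /= Eyt (@inner_prop d ze e (vscale (1 - t) e) (1 - t)) // HNs Rabs_pos_eq in Uy;
  last lra.
rewrite rpow_scale in Uy; [|lra|exact: HN0].
set I := inner ze e in Uy Uz; set M := rpow (N e) q in Uy *.
set Rz := gam / q * rpow (N (vsub z yt)) q in Uz.
have HRz : 0 <= (1 - t) * Rz.
  apply: Rmult_le_pos; first lra.
  by apply: Rmult_le_pos; [apply: Rdiv_nonneg | apply: rpow_nonneg].
have Ey := Rmult_le_compat_l t _ _ ltac:(lra) Uy.
have Ez := Rmult_le_compat_l (1 - t) _ _ ltac:(lra) Uz.
have Esum : t * (h yt + (1 - t) * I + gam / q * (Rpower (1 - t) q * M))
    + (1 - t) * (h yt + - t * I + Rz)
  = h yt + t * (Rpower (1 - t) q * (gam / q * M)) + (1 - t) * Rz by ring.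
lra.
Qed.

Lemma minimizer_growth {d} {N : vec d -> R} {q gam : R} {h : vec d -> R}
    {c : efun d} {z : vec d} {cz : R} :
  is_norm N -> 0 < q -> 0 <= gam -> rconvex h ->
  unif_convex N q gam (fun x => Some (h x)) -> econvex c -> c z = Some cz ->
  (forall y cy, c y = Some cy -> h z + cz <= h y + cy) ->
  forall y cy, c y = Some cy ->
  h z + cz + gam / q * rpow (N (vsub y z)) q <= h y + cy.
Proof.
move=> HN Hq Hgam Hh Huc Hc Hcz Hmin y cy Hcy.
suff : gam / q * rpow (N (vsub y z)) q <= h y + cy - (h z + cz) by lra.
apply: (@le_of_Rpower_limit _ _ q Hq).
  by apply: Rmult_le_pos; [apply: Rdiv_nonneg | apply: rpow_nonneg].
move=> t Ht.
have := Hc y z t Ht; rewrite Hcy Hcz /=.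
case Ect: (c _) => [ct|] //= Hct.
have Hm := Hmin _ _ Ect.
have Hchord := unif_convex_chord HN Hq Hgam Hh Huc y z t Ht.
apply: (Rmult_le_reg_l t); lra.
Qed.

Lemma ele_trans {a b c : ER} : ele a b -> ele b c -> ele a c.
Proof. by case: a => [x|]; case: b => [y|]; case: c => [w|] //=; lra. Qed.

Lemma ele_eplus {a a' b b' : ER} : ele a a' -> ele b b' -> ele (eplus a b) (eplus a' b').
Proof. by case: a => [x|]; case: a' => [x'|]; case: b => [y|]; case: b' => [y'|] //=; lra. Qed.

Lemma ele_escale {c : R} {a a' : ER} : 0 <= c -> ele a a' -> ele (escale c a) (escale c a').
Proof.
by move=> Hc; case: a => [x|]; case: a' => [x'|] //= Hx; apply: Rmult_le_compat_l.
Qed.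

Lemma econvex_eplus {d} (f1 f2 : efun d) : econvex f1 -> econvex f2 ->
  econvex (fun y => eplus (f1 y) (f2 y)).
Proof.
move=> H1 H2 x y t Ht; move: (H1 x y t Ht) (H2 x y t Ht).
case: (f1 _) => [?|]; case: (f2 (vadd _ _)) => [?|];
case: (f1 x) => [?|]; case: (f1 y) => [?|]; case: (f2 x) => [?|]; case: (f2 y) => [?|] //=.
lra.
Qed.

Lemma econvex_escale {d} (c : R) (f : efun d) : 0 < c -> econvex f ->
  econvex (fun y => escale c (f y)).
Proof.
move=> Hc Hf x y t Ht; move: (Hf x y t Ht).
case: (f _) => [v|]; case: (f x) => [vx|]; case: (f y) => [vy|] //= Hv.
have := Rmult_le_compat_l c _ _ (Rlt_le _ _ Hc) Hv; lra.
Qed.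

Lemma econvex_fhat {d} (g : vec d -> R) (G : vec d -> vec d) (l : efun d) (x : vec d) :
  econvex l -> econvex (fun y => fhat g G l y x).
Proof.
move=> Hl; apply: (econvex_eplus (fun y => Some (g x + inner (G x) (vsub y x)))) => //.
move=> y y' t Ht /=.
rewrite (@inner_lin d (G x) (vsub y x) (vsub y' x) _ t (1 - t)); first lra.
by move=> i; rewrite /vsub /vadd /vscale; ring.
Qed.

Fixpoint model_sum {d} (g : vec d -> R) (G : vec d -> vec d) (l : efun d)
    (a : nat -> R) (xs : nat -> vec d) (k : nat) : efun d :=
  match k with
  | O => fun _ => Some 0
  | S k' => fun y => eplus (model_sum g G l a xs k' y)
                           (escale (a (S k')) (fhat g G l y (xs (S k'))))
  end.

Lemma psi_split {d} (g : vec d -> R) G l h a xs k (y : vec d) :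
  psi g G l h a xs k y = eplus (Some (h y)) (model_sum g G l a xs k y).
Proof.
elim: k => [|k IH] /=; first by rewrite Rplus_0_r.
rewrite IH; case: (model_sum _ _ _ _ _ k y) => [c|] //=.
by case: (escale _ _) => [e|] //=; rewrite Rplus_assoc.
Qed.

Lemma econvex_model_sum {d} (g : vec d -> R) G l a xs k :
  econvex l -> (forall i, i <> O -> 0 < a i) -> econvex (model_sum g G l a xs k).
Proof.
move=> Hl Ha; elim: k => [|k IH] /=; first by move=> x y t Ht /=; lra.
apply: econvex_eplus => //; apply: econvex_escale; first exact: Ha.
exact: econvex_fhat.
Qed.

Lemma fhat_minorant {d} {g : vec d -> R} {G : vec d -> vec d} {l : efun d}
    {x w : vec d} {fx : R} (y : vec d) :
  subgrad l x w -> fsum g l x = Some fx ->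
  ele (Some (fx + inner (vadd (G x) w) (vsub y x))) (fhat g G l y x).
Proof.
move=> [lx [Hlx Hsub]]; rewrite /fsum /fhat Hlx /= => [[<-]].
by move: (Hsub y); case: (l y) => [ly|] //=; rewrite inner_addl; lra.
Qed.

Lemma fhat_le_fsum {d} {N : vec d -> R} {g : vec d -> R} {G : vec d -> vec d}
    (l : efun d) (x y : vec d) :
  is_norm N -> rconvex g -> is_gradient N g G -> ele (fhat g G l y x) (fsum g l y).
Proof.
move=> HN Hg HG; rewrite /fhat /fsum; case: (l y) => [ly|] //=.
by have := gradient_inequality HN Hg HG x y; lra.
Qed.

Lemma Acum_nonneg (a : nat -> R) (k : nat) :
  (forall i, i <> O -> 0 < a i) -> 0 <= Acum a k.
Proof.
move=> Ha; elim: k => [|k IH] /=; first lra.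
by have := Ha k.+1 ltac:(discriminate); lra.
Qed.

(* The data of the scheme; compared to the theorem, the assumptions on
   x_0 and z_0 are folded into [Hdom] and [Hz]. *)
Section GapEstimate.

Variables (d : nat) (N : vec d -> R) (g : vec d -> R) (G : vec d -> vec d) (l : efun d).
Variables (q gamma : R) (h : vec d -> R) (a : nat -> R) (xs z u : nat -> vec d).

Hypothesis HN : is_norm N.
Hypothesis Hg_conv : rconvex g.
Hypothesis Hg_grad : is_gradient N g G.
Hypothesis Hl_conv : econvex l.
Hypothesis Hq : 0 < q.
Hypothesis Hgamma : 0 <= gamma.
Hypothesis Hh_conv : rconvex h.
Hypothesis Hh_nonneg : forall x, 0 <= h x.
Hypothesis Hh_uc : unif_convex N q gamma (fun x => Some (h x)).
Hypothesis Ha : forall i, i <> O -> 0 < a i.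
Hypothesis Hdom : forall i, in_dom l (xs i).
Hypothesis Hz : forall k, exists m, psi g G l h a xs k (z k) = Some m /\
  forall y, ele (Some m) (psi g G l h a xs k y).
Hypothesis Hu : forall i, i <> O ->
  exists w, subgrad l (xs i) w /\ u i = vadd (G (xs i)) w.

Definition gap_term (i : nat) : R :=
  Acum a i * inner (u i) (vsub (vsub (xs i) (vscale (a i / Acum a i) (z i)))
                         (vscale (Acum a (Nat.pred i) / Acum a i) (xs (Nat.pred i))))
  - gamma / q * rpow (N (vsub (z i) (z (Nat.pred i)))) q.

Lemma gap_term_succ (m : nat) :
  gap_term m.+1 =
    - Acum a m * inner (u m.+1) (vsub (xs m) (xs m.+1))
    - a m.+1 * inner (u m.+1) (vsub (z m.+1) (xs m.+1))
    - gamma / q * rpow (N (vsub (z m.+1) (z m))) q.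
Proof.
have Hpos : 0 < Acum a m + a m.+1.
  by have := Acum_nonneg a m Ha; have := Ha m.+1 ltac:(discriminate); lra.
rewrite /gap_term /= (@inner_lin d (u m.+1) (vsub (xs m) (xs m.+1)) (vsub (z m.+1) (xs m.+1)) _
  (- Acum a m / (Acum a m + a m.+1)) (- a m.+1 / (Acum a m + a m.+1))).
  by field; lra.
by move=> i; rewrite /vsub /vscale; field; lra.
Qed.

(* Since z_k minimizes psi_k = h + (convex), psi_k grows like gamma/q ||. - z_k||^q. *)
Lemma psi_growth {k : nat} {pk : R} : psi g G l h a xs k (z k) = Some pk ->
  forall y, ele (Some (pk + gamma / q * rpow (N (vsub y (z k))) q)) (psi g G l h a xs k y).
Proof.
have [m [Hm Hmin]] := Hz k.
rewrite psi_split in Hm; case Ec: (model_sum g G l a xs k (z k)) Hm => [c|] //= [Em].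
rewrite psi_split Ec => - [<-] y; rewrite psi_split.
case Ecy: (model_sum g G l a xs k y) => [cy|] //=.
apply: (minimizer_growth HN Hq Hgamma Hh_conv Hh_uc
  (econvex_model_sum g G l a xs k Hl_conv Ha) Ec _ y cy Ecy) => y' cy' Ecy'.
by have := Hmin y'; rewrite psi_split Ecy' /= -Em.
Qed.

(* The estimate, in induction-friendly form:
   A_m f(x_m) - sum_{i<=m} E_i <= psi_m(z_m). *)
Lemma gap_bound (m : nat) (fm : R) : fsum g l (xs m) = Some fm ->
  ele (Some (Acum a m * fm - sum1 gap_term m)) (psi g G l h a xs m (z m)).
Proof.
elim: m fm => [|m IH] f1 Hf1.
  by rewrite /=; have := Hh_nonneg (z O); lra.
have [fm Hfm] : exists fm, fsum g l (xs m) = Some fm.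
  by have [lm Hlm] := Hdom m; exists (g (xs m) + lm); rewrite /fsum Hlm.
have [w [Hw Hu1]] := Hu m.+1 ltac:(discriminate).
have [pm [Hpm _]] := Hz m.
have IHm := IH fm Hfm; rewrite Hpm /= in IHm.
have Hconv := ele_trans (fhat_minorant (xs m) Hw Hf1) (fhat_le_fsum l (xs m.+1) (xs m) HN Hg_conv Hg_grad).
have Hmodel := fhat_minorant (G := G) (z m.+1) Hw Hf1.
rewrite Hfm -Hu1 /= in Hconv; rewrite -Hu1 in Hmodel.
have Ham := Ha m.+1 ltac:(discriminate).
have Hstep := ele_eplus (psi_growth Hpm (z m.+1)) (ele_escale (Rlt_le _ _ Ham) Hmodel).
apply: (ele_trans _ Hstep); rewrite /= gap_term_succ.
have := Rmult_le_compat_l (Acum a m) _ _ (Acum_nonneg a m Ha) Hconv.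
lra.
Qed.

End GapEstimate.

Theorem mainTheorem7
  (d : nat) (N : vec d -> R) (HN : is_norm N)
  (g : vec d -> R) (G : vec d -> vec d) (l : efun d)
  (Hg_conv : rconvex g) (Hg_grad : is_gradient N g G)
  (Hl_prop : proper l) (Hl_conv : econvex l) (Hl_closed : eclosed l)
  (q gamma : R) (Hq : 2 <= q) (Hgamma : 0 < gamma)
  (x0 : vec d) (Hx0 : in_dom l x0)
  (h : vec d -> R) (Hh_conv : rconvex h)
  (Hh_nonneg : forall x, 0 <= h x) (Hh_zero : forall x, h x = 0 <-> x = x0)
  (Hh_uc : unif_convex N q gamma (fun x => Some (h x)))
  (a : nat -> R) (Ha : forall i, i <> O -> 0 < a i)
  (xs : nat -> vec d) (Hxs0 : xs O = x0)
  (Hxs : forall i, i <> O -> in_dom_subdiff l (xs i))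
  (z : nat -> vec d) (Hz0 : z O = x0)
  (Hz : forall k, k <> O ->
     exists m, psi g G l h a xs k (z k) = Some m /\
       forall y, ele (Some m) (psi g G l h a xs k y))
  (u : nat -> vec d)
  (Hu : forall i, i <> O -> exists w, subgrad l (xs i) w /\ u i = vadd (G (xs i)) w)
  (k : nat) (Hk : k <> O) :
  let A := Acum a in
  let E := fun i =>
     A i * inner (u i) (vsub (vsub (xs i) (vscale (a i / A i) (z i)))
                             (vscale (A (Nat.pred i) / A i) (xs (Nat.pred i))))
     - gamma / q * rpow (N (vsub (z i) (z (Nat.pred i)))) q in
  exists fk pk,
    fsum g l (xs k) = Some fk /\ psi g G l h a xs k (z k) = Some pk /\
    A k * fk - pk <= sum1 E k.
Proof.
move=> A E.
(* all iterates lie in dom l: x_0 by assumption, the others carry subgradients *)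
have Hdom : forall i, in_dom l (xs i).
  case=> [|i]; first by rewrite Hxs0.
  by have [w [[lx [Hlx _]] _]] := Hu i.+1 ltac:(discriminate); exists lx.
(* z_0 = x_0 minimizes psi_0 = h, since h >= 0 = h x_0 *)
have Hmin : forall k, exists m, psi g G l h a xs k (z k) = Some m /\
    forall y, ele (Some m) (psi g G l h a xs k y).
  case=> [|k']; last by apply: Hz.
  exists 0; rewrite /= Hz0 (proj2 (Hh_zero x0) erefl).
  by split=> // y; apply: Hh_nonneg.
have [lk Hlk] := Hdom k.
have [pk [Hpk _]] := Hmin k.
have Hfk : fsum g l (xs k) = Some (g (xs k) + lk) by rewrite /fsum Hlk.
exists (g (xs k) + lk), pk; do 2!split => //.
have := @gap_bound d N g G l q gamma h a xs z u HN Hg_conv Hg_grad Hl_conv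
  ltac:(lra) (Rlt_le _ _ Hgamma) Hh_conv Hh_nonneg Hh_uc Ha Hdom Hmin Hu k _ Hfk.
have -> : sum1 E k = sum1 (gap_term d N q gamma a xs z u) k by [].
by rewrite Hpk /= /A; lra.
Qed.
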